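(* Let $G$ and $H$ be graphs with vertex set $\omega$. Then: (i) $G^{<\alpha>}\le G$ for every ordinal $\alpha$; (ii) if $\alpha\le\beta$ then $G^{<\alpha>}\le G^{<\beta>}$; (iii) $G\le H$ if and only if $G^{<\alpha>}\le H$ for every $\alpha<\omega_1$.
   Context: Graphs are simple and loopless; $G\le H$ means there is a homomorphism (edge-preserving vertex map) $G\to H$. For a graph $G$ with vertex set $\omega$ and an ordinal $\alpha$, $G^{<\alpha>}$ is the graph whose vertices are all finite strictly decreasing sequences of ordinals $<\alpha$ (including the empty sequence), with $\{\nu,\mu\}$ an edge iff $\nu$ is a proper initial segment of $\mu$ and $\{\ell(\nu),\ell(\mu)\}\in E(G)$, where $\ell(\nu)\in\omega$ denotes the length of $\nu$. *)

From Stdlib Require Import List Sorted.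
Import ListNotations.

Definition graph_on_omega (G : nat -> nat -> Prop) : Prop :=
  (forall x y, G x y -> G y x) /\ (forall x, ~ G x x).

Definition hom_le {V1 V2 : Type} (E1 : V1 -> V1 -> Prop) (E2 : V2 -> V2 -> Prop) : Prop :=
  exists f : V1 -> V2, forall x y, E1 x y -> E2 (f x) (f y).

Record ordinal := Ordinal {
  ord_car :> Type;
  ord_lt : ord_car -> ord_car -> Prop;
  ord_trans : forall x y z, ord_lt x y -> ord_lt y z -> ord_lt x z;
  ord_total : forall x y, ord_lt x y \/ x = y \/ ord_lt y x;
  ord_wf : well_founded ord_lt
}.

Definition ord_le (a b : ordinal) : Prop :=
  exists f : a -> b,
    (forall x y, ord_lt a x y <-> ord_lt b (f x) (f y)) /\
    (forall x (y : b), ord_lt b y (f x) -> exists z, f z = y).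

(** alpha < omega_1 : alpha is countable. *)
Definition ord_countable (a : ordinal) : Prop :=
  exists f : a -> nat, forall x y, f x = f y -> x = y.

Definition sdec (a : ordinal) (s : list a) : Prop :=
  Sorted (fun x y => ord_lt a y x) s.

Definition ord_seq (a : ordinal) := { s : list a | sdec a s }.

Definition proper_prefix {A : Type} (s t : list A) : Prop :=
  exists u, u <> [] /\ t = s ++ u.

Definition ord_power (G : nat -> nat -> Prop) (a : ordinal)
  (nu mu : ord_seq a) : Prop :=
  (proper_prefix (proj1_sig nu) (proj1_sig mu) \/
   proper_prefix (proj1_sig mu) (proj1_sig nu)) /\
  G (length (proj1_sig nu)) (length (proj1_sig mu)).

From Stdlib Require Import List Sorted Arith Lia Cantor.
From Stdlib Require Import Classical ClassicalEpsilon ChoiceFacts ProofIrrelevance.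
Import ListNotations.

(* (i) and (ii) are immediate: send a sequence to its length, resp. map it along the embedding.
   For (iii), suppose G is not <= H. The finite partial homomorphisms from (an initial segment
   of) G to H, ordered by the Kleene-Brouwer order, are then well-founded: an infinite descending
   chain would stabilise coordinatewise to a homomorphism G -> H. This gives a countable ordinal
   alpha. A homomorphism g : G^<alpha> -> H would produce an infinite descending chain in alpha:
   starting from the empty sequence, append to the current sequence nu the partial homomorphism
   read off from g along the prefixes of nu; each appended element properly extends, hence is
   KB-below, the previous one. *)

Fixpoint kb_lt (s t : list nat) : Prop :=
  match s, t with
  | [], _ => False
  | _ :: _, [] => True
  | a :: s', b :: t' => a < b \/ (a = b /\ kb_lt s' t')
  end.

Lemma kb_lt_app_l p u v : kb_lt (p ++ u) (p ++ v) <-> kb_lt u v.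
Proof.
  induction p as [|a p IH]; simpl; [tauto|].
  rewrite IH. split; [intros [H|[_ H]]; [lia|exact H]|auto].
Qed.

Lemma kb_lt_app_r p u : u <> [] -> kb_lt (p ++ u) p.
Proof.
  intro Hu. rewrite <- (app_nil_r p) at 2. rewrite kb_lt_app_l.
  destruct u; simpl; tauto.
Qed.

Lemma kb_lt_trans s t r : kb_lt s t -> kb_lt t r -> kb_lt s r.
Proof.
  revert t r; induction s as [|a s IH]; intros [|b t] [|c r]; simpl; try tauto.
  intros [H1|[H1 H2]] [H3|[H3 H4]]; subst; try lia; eauto.
Qed.

Lemma kb_lt_total s t : kb_lt s t \/ s = t \/ kb_lt t s.
Proof.
  revert t; induction s as [|a s IH]; intros [|b t]; simpl; auto.
  destruct (Nat.lt_total a b) as [H|[H|H]]; auto. subst.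
  destruct (IH t) as [H|[H|H]]; subst; auto.
Qed.

Lemma nonincreasing_eventually_constant (h : nat -> nat) N :
  (forall n, N <= n -> h (S n) <= h n) ->
  exists M, N <= M /\ forall n, M <= n -> h n = h M.
Proof.
  remember (h N) as v eqn:Hv. revert N Hv.
  induction v as [v IH] using (well_founded_ind lt_wf). intros N Hv Hmono.
  assert (Hle : forall n, N <= n -> h n <= h N).
  { intros n Hn; induction Hn; [lia|]. specialize (Hmono m Hn). lia. }
  destruct (classic (forall n, N <= n -> h n = h N)) as [C|C]; [exists N; auto|].
  apply not_all_ex_not in C as [n C]. apply imply_to_and in C as [Hn C].
  destruct (IH (h n)) with (N := n) as [M [HM1 HM2]];
    [specialize (Hle n Hn); lia | reflexivity | intros m Hm; apply Hmono; lia |].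
  exists M; split; [lia|exact HM2].
Qed.

Section KBDescending.

Variable f : nat -> list nat.
Hypothesis f_desc : forall n, kb_lt (f (S n)) (f n).

(* Once a prefix [p] is fixed from [N] on, the entries at position [length p] are
   nonincreasing in [n], hence eventually constant. *)
Lemma kb_descending_prefix_stable k :
  exists p N, length p = k /\ forall n, N <= n -> exists u, f n = p ++ u.
Proof.
  induction k as [|k IH].
  { exists [], 0. split; [reflexivity|]. intros n _. exists (f n). reflexivity. }
  destruct IH as [p [N [Hl Hp]]].
  assert (Hext : forall n, S N <= n -> exists a u, f n = p ++ a :: u).
  { intros [|n] Hn; [lia|].
    destruct (Hp (S n)) as [u1 E1]; [lia|]. destruct (Hp n) as [u2 E2]; [lia|].
    pose proof (f_desc n) as D. rewrite E1, E2, kb_lt_app_l in D.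
    destruct u1 as [|a u1]; [simpl in D; tauto|eauto]. }
  set (h := fun n => nth k (f n) 0).
  assert (Hh : forall n a u, f n = p ++ a :: u -> h n = a).
  { intros n a u E. unfold h. rewrite E, <- Hl. apply nth_middle. }
  destruct (nonincreasing_eventually_constant h (S N)) as [M [HM1 HM2]].
  { intros n Hn. destruct (Hext n) as [a [u E]]; [lia|].
    destruct (Hext (S n)) as [b [v E']]; [lia|].
    pose proof (f_desc n) as D. rewrite E, E', kb_lt_app_l in D.
    rewrite (Hh _ _ _ E), (Hh _ _ _ E'). simpl in D. lia. }
  exists (p ++ [h M]), M. split; [rewrite length_app; simpl; lia|].
  intros n Hn. destruct (Hext n) as [a [u E]]; [lia|].
  exists u. rewrite E, <- app_assoc, <- (HM2 n Hn), (Hh _ _ _ E). reflexivity.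
Qed.

Lemma kb_descending_coordinate_stable i :
  exists v N, forall n, N <= n -> i < length (f n) /\ nth i (f n) 0 = v.
Proof.
  destruct (kb_descending_prefix_stable (S i)) as [p [N [Lp Hp]]].
  exists (nth i p 0), N. intros n Hn. destruct (Hp n Hn) as [u ->].
  rewrite length_app, app_nth1 by lia. split; [lia|reflexivity].
Qed.

End KBDescending.

Lemma not_Acc_descending_chain {A : Type} (R : A -> A -> Prop) x :
  ~ Acc R x -> exists f : nat -> A, forall n, R (f (S n)) (f n).
Proof.
  intro nacc.
  assert (Hstep : forall z : {z | ~ Acc R z}, exists z' : {z | ~ Acc R z},
             R (proj1_sig z') (proj1_sig z)).
  { intros [z nz]. apply NNPP; intro C. apply nz. constructor. intros y Hy.
    apply NNPP; intro ny. apply C. exists (exist _ y ny). exact Hy. }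
  destruct (functional_choice_imp_functional_dependent_choice choice
              (fun z z' => R (proj1_sig z') (proj1_sig z)) Hstep (exist _ x nacc)) as [f [_ Hf]].
  exists (fun n => proj1_sig (f n)). exact Hf.
Qed.

Lemma Sorted_map {A B : Type} (R : A -> A -> Prop) (R' : B -> B -> Prop) (f : A -> B) :
  (forall x y, R x y -> R' (f x) (f y)) -> forall l, Sorted R l -> Sorted R' (map f l).
Proof.
  intros Hf l Hl. induction Hl as [|x l Hl IH Hd]; simpl; constructor; auto.
  destruct Hd; simpl; constructor; auto.
Qed.

Lemma Sorted_snoc {A : Type} (R : A -> A -> Prop) l x y :
  Sorted R (l ++ [x]) -> R x y -> Sorted R ((l ++ [x]) ++ [y]).
Proof.
  intros Hl Hxy. rewrite <- app_assoc. simpl.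
  induction l as [|a l IH]; simpl in *.
  - repeat constructor; auto.
  - apply Sorted_inv in Hl as [Hl Hd]. constructor; auto.
    destruct l; simpl in *; inversion Hd; constructor; auto.
Qed.

Fixpoint list_to_nat (l : list nat) : nat :=
  match l with [] => 0 | a :: l => S (Cantor.to_nat (a, list_to_nat l)) end.

Lemma list_to_nat_inj l1 l2 : list_to_nat l1 = list_to_nat l2 -> l1 = l2.
Proof.
  revert l2; induction l1 as [|a l1 IH]; intros [|b l2]; cbn [list_to_nat];
    try discriminate; auto.
  intro E. apply Nat.succ_inj, (f_equal Cantor.of_nat) in E.
  rewrite !Cantor.cancel_of_to in E. injection E as -> E. f_equal; auto.
Qed.

Lemma hom_le_trans {V1 V2 V3 : Type} (E1 : V1 -> V1 -> Prop) (E2 : V2 -> V2 -> Prop)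
  (E3 : V3 -> V3 -> Prop) : hom_le E1 E2 -> hom_le E2 E3 -> hom_le E1 E3.
Proof. intros [f Hf] [g Hg]. exists (fun x => g (f x)). auto. Qed.

Lemma hom_le_of_lt (G H : nat -> nat -> Prop) (b : nat -> nat) :
  graph_on_omega G -> graph_on_omega H ->
  (forall x y, x < y -> G x y -> H (b x) (b y)) -> hom_le G H.
Proof.
  intros [sG iG] [sH _] Hb. exists b. intros x y Gxy.
  destruct (Nat.lt_total x y) as [L|[<-|L]]; auto.
  exfalso; exact (iG x Gxy).
Qed.

Section PartialHoms.

Variables G H : nat -> nat -> Prop.
Hypothesis hG : graph_on_omega G.
Hypothesis hH : graph_on_omega H.

Definition partial_hom (l : list nat) : Prop :=
  forall i j, i < j -> j < length l -> G i j -> H (nth i l 0) (nth j l 0).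

Lemma hom_le_of_kb_descending (f : nat -> list nat) :
  (forall n, partial_hom (f n)) -> (forall n, kb_lt (f (S n)) (f n)) -> hom_le G H.
Proof.
  intros f_phom f_desc.
  destruct (choice _ (kb_descending_coordinate_stable f f_desc)) as [b Hb].
  apply (hom_le_of_lt G H b hG hH). intros x y Hxy Gxy.
  destruct (Hb x) as [N1 H1]. destruct (Hb y) as [N2 H2].
  destruct (H1 (N1 + N2)) as [_ <-]; [lia|]. destruct (H2 (N1 + N2)) as [Ly <-]; [lia|].
  exact (f_phom _ x y Hxy Ly Gxy).
Qed.

Definition phom := { l : list nat | partial_hom l }.

Definition phom_lt (x y : phom) : Prop := kb_lt (proj1_sig x) (proj1_sig y).

Lemma phom_lt_trans x y z : phom_lt x y -> phom_lt y z -> phom_lt x z.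
Proof. apply kb_lt_trans. Qed.

Lemma phom_lt_total x y : phom_lt x y \/ x = y \/ phom_lt y x.
Proof.
  destruct x as [x ox], y as [y oy]. unfold phom_lt; simpl.
  destruct (kb_lt_total x y) as [E|[E|E]]; auto.
  right; left. apply ProofIrrelevanceTheory.subset_eq_compat, E.
Qed.

Lemma phom_lt_wf : ~ hom_le G H -> well_founded phom_lt.
Proof.
  intros nhom x. apply NNPP; intro nacc.
  destruct (not_Acc_descending_chain phom_lt x nacc) as [f Hf].
  apply nhom, (hom_le_of_kb_descending (fun n => proj1_sig (f n))); intro n.
  - exact (proj2_sig (f n)).
  - exact (Hf n).
Qed.

Definition kb_ordinal (wf : well_founded phom_lt) : ordinal :=
  Ordinal phom phom_lt phom_lt_trans phom_lt_total wf.

Lemma kb_ordinal_countable wf : ord_countable (kb_ordinal wf).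
Proof.
  exists (fun x : phom => list_to_nat (proj1_sig x)).
  intros [x ox] [y oy] E. simpl in E. apply list_to_nat_inj in E. subst.
  f_equal. apply proof_irrelevance.
Qed.

Section NoHomFromPower.

Variable wf : well_founded phom_lt.
Let alpha := kb_ordinal wf.
Variable g : ord_seq alpha -> nat.
Hypothesis hg : forall x y, ord_power G alpha x y -> H (g x) (g y).

Definition traces (nu : ord_seq alpha) (t : list nat) : Prop :=
  length t = S (length (proj1_sig nu)) /\
  forall i, i < length t -> exists q : ord_seq alpha, length (proj1_sig q) = i /\
    (exists u, proj1_sig nu = proj1_sig q ++ u) /\ nth i t 0 = g q.

Lemma traces_partial_hom nu t : traces nu t -> partial_hom t.
Proof.
  intros [_ Ht] i j Hij Hj Gij.
  destruct (Ht i) as [qi [Li [[ui Ei] ->]]]; [lia|].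
  destruct (Ht j) as [qj [Lj [[uj Ej] ->]]]; [lia|].
  apply hg. split; [|rewrite Li, Lj; exact Gij].
  rewrite Ei in Ej. apply app_eq_app in Ej as [l [[E _]|[E _]]].
  - rewrite E, length_app in Li. lia.
  - left. exists l. split; [|exact E].
    intros ->. rewrite app_nil_r in E. rewrite E in Lj. lia.
Qed.

Lemma traces_snoc nu t x (Hs : sdec alpha (proj1_sig nu ++ [x])) :
  traces nu t -> traces (exist _ _ Hs) (t ++ [g (exist _ _ Hs)]).
Proof.
  intros [Lt Ht]. split; cbn [proj1_sig]; [rewrite !length_app, Lt; reflexivity|].
  intros i Hi. rewrite length_app in Hi; simpl in Hi.
  destruct (Nat.eq_dec i (length t)) as [->|Ei].
  - exists (exist _ _ Hs). cbn [proj1_sig]. rewrite length_app, nth_middle, Lt.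
    split; [apply Nat.add_1_r|]. split; [exists []; rewrite app_nil_r|]; reflexivity.
  - destruct (Ht i) as [q [Lq [[u Eu] Nq]]]; [lia|].
    exists q. split; [exact Lq|]. split.
    + exists (u ++ [x]). rewrite Eu, app_assoc. reflexivity.
    + rewrite app_nth1 by lia. exact Nq.
Qed.

(* By well-founded induction on [y]: the trace along [nu ++ [y]] properly extends [t],
   so it is a smaller element of [alpha] in the same situation. *)
Lemma traces_snoc_not_sdec (y : phom) :
  forall nu t, traces nu t -> proj1_sig y = t -> ~ sdec alpha (proj1_sig nu ++ [y]).
Proof.
  induction y as [y IH] using (well_founded_ind wf).
  intros nu t Htr Ey Hs.
  set (nu' := exist _ _ Hs : ord_seq alpha).
  set (t' := t ++ [g nu']).
  assert (Htr' : traces nu' t') by apply traces_snoc, Htr.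
  set (y' := exist _ t' (traces_partial_hom _ _ Htr') : phom).
  assert (Hlt : phom_lt y' y).
  { unfold phom_lt; simpl. rewrite Ey. apply kb_lt_app_r. discriminate. }
  apply (IH y' Hlt nu' t' Htr' eq_refl), Sorted_snoc; [exact Hs | exact Hlt].
Qed.

Lemma power_hom_absurd : False.
Proof.
  set (nu0 := exist _ [] (Sorted_nil _) : ord_seq alpha).
  assert (Htr : traces nu0 [g nu0]).
  { split; [reflexivity|]. intros i Hi. simpl in Hi. replace i with 0 by lia.
    exists nu0. split; [reflexivity|]. split; [exists []|]; reflexivity. }
  set (y0 := exist _ [g nu0] (traces_partial_hom _ _ Htr) : phom).
  apply (traces_snoc_not_sdec y0 nu0 _ Htr eq_refl). simpl. repeat constructor.
Qed.

End NoHomFromPower.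

Lemma not_hom_le_power_kb_ordinal wf : ~ hom_le (ord_power G (kb_ordinal wf)) H.
Proof. intros [g hg]. exact (power_hom_absurd wf g hg). Qed.

End PartialHoms.

Lemma hom_le_power_base G a : hom_le (ord_power G a) G.
Proof. exists (fun nu => length (proj1_sig nu)). intros x y [_ E]. exact E. Qed.

Lemma hom_le_power_mono G a b : ord_le a b -> hom_le (ord_power G a) (ord_power G b).
Proof.
  intros [f [hf _]].
  assert (hmap : forall nu : ord_seq a, sdec b (map f (proj1_sig nu))).
  { intro nu. apply (Sorted_map (fun x y => ord_lt a y x) _ f);
      [intros x y; apply hf | exact (proj2_sig nu)]. }
  exists (fun nu => exist (sdec b) (map f (proj1_sig nu)) (hmap nu)).
  intros [x Sx] [y Sy] [Pre E]; simpl in *.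
  split; [|rewrite <- (length_map f x), <- (length_map f y) in E; exact E].
  destruct Pre as [[u [Hu ->]]|[u [Hu ->]]]; [left|right]; exists (map f u);
    (split; [destruct u; simpl; congruence | apply map_app]).
Qed.

Theorem lemma8 (G H : nat -> nat -> Prop) (hG : graph_on_omega G) (hH : graph_on_omega H) :
  (forall a : ordinal, hom_le (ord_power G a) G) /\
  (forall a b : ordinal, ord_le a b -> hom_le (ord_power G a) (ord_power G b)) /\
  (hom_le G H <-> (forall a : ordinal, ord_countable a -> hom_le (ord_power G a) H)).
Proof.
  split; [exact (hom_le_power_base G)|]. split; [exact (hom_le_power_mono G)|]. split.
  - intros GH a _. exact (hom_le_trans _ _ _ (hom_le_power_base G a) GH).
  - intro Hall. apply NNPP. intro nhom.
    pose proof (phom_lt_wf G H hG hH nhom) as wf.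
    exact (not_hom_le_power_kb_ordinal G H wf (Hall _ (kb_ordinal_countable G H wf))).
Qed.
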